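(* Let $A$ be a finite abelian group. A subgroup inclusion $X\subseteq A$ is a cellular cover of $A$ if and only if $X$ is the $k$-torsion subgroup $\{x\in A: kx=0\}$ of $A$ for some positive integer $k$. Moreover every cellular cover of $A$ is equivalent to such an inclusion, so $\mathrm{Cov}(A)$ is in bijection with the set of subgroups of $A$ of the form $\{x\in A:kx=0\}$, $k\ge1$.
   Context: A cellular cover of $A$ is a homomorphism $c:X\to A$ such that $\mathrm{Hom}(X,X)\to\mathrm{Hom}(X,A)$, $f\mapsto cf$, is bijective; two cellular covers $c:X\to A$, $d:Y\to A$ are equivalent if $dh=c$ for some isomorphism $h:X\to Y$, and $\mathrm{Cov}(A)$ is the set of equivalence classes. (For finitely generated nilpotent groups such covers are injective, so they are equivalent to subgroup inclusions.) *)

From HB Require Import structures.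
From mathcomp Require Import all_boot all_fingroup.
Set Implicit Arguments. Unset Strict Implicit. Unset Printing Implicit Defensive.
Local Open Scope group_scope.

Definition is_hom (X Y : groupType) (f : X -> Y) : Prop :=
  forall x y : X, f (x * y) = f x * f y.

(* c : X -> A is a cellular cover: c is a homomorphism and
   Hom(X,X) -> Hom(X,A), f |-> c o f, is bijective (homomorphisms being
   compared as functions, i.e. pointwise). *)
Definition cellular_cover (X A : groupType) (c : X -> A) : Prop :=
  [/\ is_hom c,
      (forall f g : X -> X, is_hom f -> is_hom g ->
          (forall x, c (f x) = c (g x)) -> forall x, f x = g x)
    & (forall h : X -> A, is_hom h ->
          exists2 f : X -> X, is_hom f & forall x, h x = c (f x))].

Definition cover_equiv (X Y A : groupType) (c : X -> A) (d : Y -> A) : Prop :=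
  exists h : X -> Y, [/\ is_hom h, bijective h & forall x, d (h x) = c x].

(* The k-torsion subgroup {x in A | k x = 0} (written multiplicatively). *)
Definition torsion (aT : finGroupType) (k : nat) : {set aT} :=
  [set x : aT | x ^+ k == 1].

From HB Require Import structures.
From mathcomp Require Import all_boot all_fingroup all_solvable.
From mathcomp Require Import boolp.
Set Implicit Arguments. Unset Strict Implicit. Unset Printing Implicit Defensive.
Local Open Scope group_scope.

(* The key tool is a universal property of finite abelian groups G: there is
   an element x of G, of maximal order exponent G, such that for every group Y
   and every b : Y with b ^+ exponent G = 1 some homomorphism G -> <[b]>
   sends x to b.  It comes from a retraction of G onto the direct factor <[x]>
   followed by the "discrete logarithm" x ^+ i |-> b ^+ i.

   (1) A subgroup H of A that is closed under every homomorphism H -> A is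
       the torsion subgroup {a | a ^+ exponent H = 1}; conversely torsion
       subgroups are closed in this sense, and the inclusion H -> A is a cellular cover
       exactly when H is closed.
   (2) For any cellular cover c : X -> A, kernel elements are central and every
       endomorphism of X with values in ker c is trivial.  For A abelian this
       makes X abelian (z |-> [~ z, y] is such an endomorphism); for A finite
       abelian it bounds the exponent of X by that of the image of c and then,
       by the universal property, kills ker c.  So c is an isomorphism onto its
       image, which is closed under homomorphisms, hence a torsion subgroup.
   (3) Equivalent subgroup inclusions have the same image, so are equal. *)

Section Homomorphisms.
Variables (X Y : groupType) (f : X -> Y).
Hypothesis f_hom : is_hom f.

Lemma hom1 : f 1 = 1.
Proof. by apply: (@mulgI _ (f 1)); rewrite -f_hom !mulg1. Qed.

Lemma homV x : f x^-1 = (f x)^-1.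
Proof. by apply: (@mulgI _ (f x)); rewrite -f_hom !mulgV hom1. Qed.

Lemma homX x n : f (x ^+ n) = f x ^+ n.
Proof. by elim: n => [|n IHn]; rewrite ?hom1 // !expgS f_hom IHn. Qed.

End Homomorphisms.

Lemma expg_eq_mod (Y : groupType) (b : Y) n i j :
  b ^+ n = 1 -> i = j %[mod n] -> b ^+ i = b ^+ j.
Proof.
have expg_mod k : b ^+ n = 1 -> b ^+ (k %% n) = b ^+ k.
  by move=> bn; rewrite {2}(divn_eq k n) expgnDr mulnC expgnA bn expg1n mul1g.
by move=> bn eq_ij; rewrite -(expg_mod i bn) eq_ij expg_mod.
Qed.

Section DiscreteLog.
Variable aT : finGroupType.
Implicit Types x z : aT.

Definition dlog x z : nat := index z (mkseq (fun i => x ^+ i) #[x]).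

Lemma dlogK x z : z \in <[x]> -> x ^+ dlog x z = z.
Proof.
case/cyclePmin=> i lt_i_x ->.
have xi_in : x ^+ i \in mkseq (fun i => x ^+ i) #[x].
  by apply/mapP; exists i; rewrite ?mem_iota.
have := nth_index 1 xi_in; rewrite nth_mkseq //.
by rewrite -{2}(size_mkseq (fun i => x ^+ i) #[x]) index_mem.
Qed.

Lemma dlog_morph x (Y : groupType) (b : Y) : b ^+ #[x] = 1 ->
  {in <[x]> &, {morph (fun z => b ^+ dlog x z) : u v / u * v}}.
Proof.
move=> bx u v xu xv /=; rewrite -expgnDr; apply: (expg_eq_mod bx).
by apply/eqP; rewrite -eq_expg_mod_order expgnDr !dlogK ?groupM.
Qed.

Lemma dlog_gen x (Y : groupType) (b : Y) : b ^+ #[x] = 1 -> b ^+ dlog x x = b.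
Proof.
move=> bx; rewrite -[RHS]expg1; apply: (expg_eq_mod bx).
by apply/eqP; rewrite -eq_expg_mod_order expg1 dlogK ?cycle_id.
Qed.

End DiscreteLog.

Section HomClosedSubgroups.
Variable aT : finGroupType.

Lemma exponent_element_universal (G : {group aT}) : abelian G ->
  exists2 x, x \in G & forall (Y : groupType) (b : Y), b ^+ exponent G = 1 ->
    exists f : aT -> Y, [/\ {in G &, {morph f : u v / u * v}}, f x = b
                          & forall u, exists n, f u = b ^+ n].
Proof.
move=> abG; have [x Gx oG] := exponent_witness (abelian_nil abG).
have /splitsP[K /complP[tiXK defG]] := abelian_splits Gx (esym oG) abG.
have sKG : K \subset G by rewrite -defG mulG_subr.
have cXK : K \subset 'C(<[x]>).
  by apply: subset_trans sKG (subset_trans abG (centS _)); rewrite cycle_subG.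
have retrM : {in G &, {morph divgr <[x]> K : u v / u * v}}.
  by apply: divgrM => //; apply/complP.
exists x => // Y b; rewrite oG => bx.
exists (fun a => b ^+ dlog x (divgr <[x]> K a)); split.
- by move=> u v Gu Gv /=; rewrite retrM // dlog_morph // mem_divgr ?defG.
- by rewrite divgr_id ?cycle_id // dlog_gen.
- by move=> u; exists (dlog x (divgr <[x]> K u)).
Qed.

Definition hom_closed (H : {set aT}) : Prop :=
  forall h : aT -> aT, {in H &, {morph h : u v / u * v}} ->
    {in H, forall y, h y \in H}.

(* A finite abelian subgroup closed under homomorphisms is a torsion subgroup:
   any a with a ^+ exponent H = 1 is the image of the universal element. *)
Lemma hom_closed_torsion (H : {group aT}) : abelian H -> hom_closed H ->
  H :=: torsion aT (exponent H).
Proof.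
move=> abH closedH; apply/setP=> a; rewrite inE; apply/idP/idP.
  by move=> Ha; rewrite expg_exponent.
move/eqP=> aH; have [x Hx univ] := exponent_element_universal abH.
by have [f [fM <- _]] := univ _ _ aH; exact: closedH fM _ Hx.
Qed.

Lemma torsion_hom_closed (H : {group aT}) k :
  H :=: torsion aT k -> hom_closed H.
Proof.
move=> defH h hM y Hy.
have h1 : h 1 = 1 by apply: (@mulgI _ (h 1)); rewrite -hM ?mulg1.
have hX n : h (y ^+ n) = h y ^+ n.
  by elim: n => [|n IHn]; rewrite ?h1 // !expgS hM ?groupX // IHn.
by move: Hy; rewrite defH !inE -hX => /eqP->; rewrite h1.
Qed.

Lemma hom_closedP (H : {group aT}) : abelian H ->
  hom_closed H <-> exists2 k, 0 < k & H :=: torsion aT k.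
Proof.
move=> abH; split=> [closedH | [k _ /torsion_hom_closed//]].
by exists (exponent H); [apply: exponent_gt0 | apply: hom_closed_torsion].
Qed.

Lemma inclusion_coverP (H : {group aT}) :
  cellular_cover (@sgval aT H) <-> hom_closed H.
Proof.
split=> [[_ _ lift] h hM y Hy | closedH].
  have [|f _ hf] := lift (fun u => h (sgval u)).
    by move=> u v; rewrite /= -hM ?subgP.
  by have := hf (subg H y); rewrite subgK // => ->; apply: subgP.
split=> [u v // | f g _ _ eq_fg x | h h_hom].
  exact/subg_inj/eq_fg.
have hM : {in H &, {morph (fun a => h (subg H a)) : u v / u * v}}.
  by move=> u v Hu Hv /=; rewrite subgM ?h_hom.
have hH u : h u \in H by have := closedH _ hM _ (subgP u); rewrite /= sgvalK.
exists (fun u => subg H (h u)) => [u v | u]; last by rewrite subgK.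
by apply: subg_inj; rewrite /= !subgK ?h_hom ?groupM.
Qed.

Lemma inclusion_equiv_eq (H K : {group aT}) :
  cover_equiv (@sgval aT H) (@sgval aT K) -> H :=: K.
Proof.
move=> [h [_ [g _ gK] eqh]]; apply/eqP; rewrite eqEsubset.
apply/andP; split; apply/subsetP=> y.
  by move=> Hy; have := subgP (h (subg H y)); rewrite eqh subgK.
by move=> Ky; have := subgP (g (subg K y)); rewrite -eqh gK subgK.
Qed.

End HomClosedSubgroups.

Section CellularCover.
Variables (X A : groupType) (c : X -> A).
Hypothesis cover : cellular_cover c.

Let c_hom : is_hom c. Proof. by case: cover. Qed.

Let c_cancel (f g : X -> X) : is_hom f -> is_hom g ->
  (forall x, c (f x) = c (g x)) -> forall x, f x = g x.
Proof. by case: cover => _ + _; apply. Qed.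

Let id_hom : is_hom (@id X). Proof. by []. Qed.

(* Conjugation by a kernel element has the same composite with c as the
   identity, so it is the identity: kernel elements are central. *)
Lemma cover_kernel_central k y : c k = 1 -> k * y = y * k.
Proof.
move=> ck; have conj_hom : is_hom (fun z => z ^ k).
  by move=> u v; rewrite conjMg.
have fix_y : y ^ k = y.
  apply: (c_cancel conj_hom id_hom) => z.
  by rewrite conjgE !c_hom (homV c_hom) ck invg1 mul1g mulg1.
by rewrite -[in LHS]fix_y conjgE mulVKg.
Qed.

(* If g has values in ker c, then z |-> z * g z is an endomorphism with the
   same composite with c as the identity, so g is trivial. *)
Lemma cover_kernel_endo_trivial (g : X -> X) : is_hom g ->
  (forall y, c (g y) = 1) -> forall y, g y = 1.
Proof.
move=> g_hom cg y.
have twist_hom : is_hom (fun z => z * g z).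
  move=> u v; rewrite g_hom !mulgA; congr (_ * _); rewrite -!mulgA.
  by rewrite (cover_kernel_central v (cg u)).
have fix_y : y * g y = y.
  by apply: (c_cancel twist_hom id_hom) => z; rewrite c_hom cg mulg1.
by apply: (@mulgI _ y); rewrite fix_y mulg1.
Qed.

(* Over an abelian A all commutators lie in ker c, so z |-> [~ z, y] is an
   endomorphism into ker c, hence trivial: X is abelian. *)
Lemma cover_commutative : (forall a b : A, a * b = b * a) ->
  forall x y : X, x * y = y * x.
Proof.
move=> cA x y; have c_comm z : c [~ z, y] = 1.
  by rewrite commgEl conjgE !c_hom !(homV c_hom) (cA (c z)) mulKg mulVg.
have comm_hom : is_hom (fun z => [~ z, y]).
  move=> u v; apply: (@mulgI _ (y * (u * v))); rewrite -commgC.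
  rewrite -mulgA (commgC v y) !mulgA (commgC u y) -(mulgA _ [~ u, y] v).
  by rewrite (cover_kernel_central v (c_comm u)) !mulgA.
by apply/commgP/eqP; apply: (cover_kernel_endo_trivial comm_hom c_comm).
Qed.

End CellularCover.

Section FiniteAbelianCover.
Variables (aT : finGroupType) (X : groupType) (c : X -> aT).
Hypotheses (abA : abelian [set: aT]) (cover : cellular_cover c).

Let c_hom : is_hom c. Proof. by case: cover. Qed.

Definition cover_image : {set aT} := [set a | `[< exists y, c y = a >]].

Lemma cover_imageP a : reflect (exists y, c y = a) (a \in cover_image).
Proof. by rewrite inE; apply: asboolP. Qed.

Lemma mem_cover_image y : c y \in cover_image.
Proof. by apply/cover_imageP; exists y. Qed.

Lemma cover_image_group_set : group_set cover_image.
Proof.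
apply/group_setP; split; first by rewrite -(hom1 c_hom) mem_cover_image.
move=> _ _ /cover_imageP[y <-] /cover_imageP[z <-].
by rewrite -c_hom mem_cover_image.
Qed.
Canonical cover_image_group := Group cover_image_group_set.

(* Homomorphisms I -> A lift through c, so they map I into I. *)
Lemma cover_image_hom_closed : hom_closed cover_image.
Proof.
move=> h hM _ /cover_imageP[y <-].
have hc_hom : is_hom (fun z => h (c z)).
  by move=> u v; rewrite c_hom hM ?mem_cover_image.
by case: cover => _ _ /(_ _ hc_hom)[f _ ->]; apply: mem_cover_image.
Qed.

Let abX : forall x y : X, x * y = y * x.
Proof.
by apply: (cover_commutative cover) => a b; apply: (centsP abA); rewrite inE.
Qed.

(* z |-> z ^+ exponent I has values in ker c, so X has exponent dividing I's. *)
Lemma cover_exponent (y : X) : y ^+ exponent cover_image = 1.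
Proof.
have exp_hom : is_hom (fun z : X => z ^+ exponent cover_image).
  by move=> u v; rewrite expgMn //; apply: abX.
apply: (cover_kernel_endo_trivial cover exp_hom) => z.
by rewrite (homX c_hom) expg_exponent ?mem_cover_image.
Qed.

(* A kernel element k is the image of a preimage of the universal element of
   I under an endomorphism of X with values in <[k]> <= ker c; hence k = 1. *)
Lemma cover_injective : injective c.
Proof.
have kernel_trivial k : c k = 1 -> k = 1.
  move=> ck; have abI : abelian cover_image by apply: abelianS (subsetT _) abA.
  have [x /cover_imageP[y cy] univ] := exponent_element_universal abI.
  have [f [fM fx fk]] := univ _ _ (cover_exponent k).
  have fc_hom : is_hom (fun z => f (c z)).
    by move=> u v; rewrite c_hom fM ?mem_cover_image.
  rewrite -fx -cy; apply: (cover_kernel_endo_trivial cover fc_hom) => z.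
  by have [n ->] := fk (c z); rewrite (homX c_hom) ck expg1n.
move=> u v cuv; apply: divg1_eq; apply: kernel_trivial.
by rewrite c_hom (homV c_hom) cuv mulgV.
Qed.

Lemma cover_equiv_image : cover_equiv c (@sgval aT cover_image_group).
Proof.
have preimage (u : subg_of cover_image_group) : exists y, c y == sgval u.
  by have /cover_imageP[y cy] := subgP u; exists y; apply/eqP.
have preimageK u : c (xchoose (preimage u)) = sgval u.
  exact/eqP/(xchooseP (preimage u)).
exists (fun y => subg cover_image_group (c y)); split.
- by move=> u v; rewrite c_hom subgM ?mem_cover_image.
- exists (fun u => xchoose (preimage u)) => [y | u].
    by apply: cover_injective; rewrite preimageK subgK ?mem_cover_image.
  by apply: subg_inj; rewrite subgK ?mem_cover_image // preimageK.
- by move=> y; rewrite subgK ?mem_cover_image.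
Qed.

End FiniteAbelianCover.

Theorem proposition4p5 (aT : finGroupType) (Aab : abelian [set: aT]) :
  (forall H : {group aT},
      cellular_cover (@sgval aT H) <->
      exists2 k : nat, 0 < k & (H :=: torsion aT k))
  /\ (forall (X : groupType) (c : X -> aT), cellular_cover c ->
      exists H : {group aT},
        (exists2 k : nat, 0 < k & (H :=: torsion aT k)) /\
        cover_equiv c (@sgval aT H))
  /\ (forall H K : {group aT},
      cover_equiv (@sgval aT H) (@sgval aT K) -> H :=: K).
Proof.
have abH (H : {group aT}) : abelian H by apply: abelianS (subsetT H) Aab.
split; [|split]; last exact: inclusion_equiv_eq.
  by move=> H; apply: iff_trans (inclusion_coverP H) (hom_closedP (abH H)).
move=> X c cover; exists (cover_image_group cover); split.
  by apply/hom_closedP; [apply: abH | apply: cover_image_hom_closed].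
exact: cover_equiv_image.
Qed.
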